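(* Let $k$ and $a_n$ be integers with $a_n\ge k-1\ge 2$, and let $n=a_nk$. Then $src^*(C_n(\{1,k\}))=rc^*(C_n(\{1,k\}))=a_n+k-2$.
   Context: For $n\ge 2$ and $S\subseteq\{1,\dots,n-1\}$, the circulant digraph $C_n(S)$ has vertex set $\{v_0,\dots,v_{n-1}\}$ and arcs $v_iv_j$ for all $i,j$ with $j-i\equiv s \pmod n$ for some $s\in S$. For a strongly connected digraph $D$ and an arc-colouring $\Gamma:A(D)\to\{1,\dots,k\}$, a directed path is rainbow if its arcs have pairwise distinct colours. $\Gamma$ is rainbow connected if for every ordered pair of distinct vertices $x,y$ there is a rainbow directed $xy$-path; $rc^*(D)$ is the minimum number of colours of such a colouring. $\Gamma$ is strongly rainbow connected if for every ordered pair of distinct vertices $x,y$ there is a rainbow directed $xy$-path of length $d_D(x,y)$; $src^*(D)$ is the minimum such number. *)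

From mathcomp Require Import all_boot.
Set Implicit Arguments. Unset Strict Implicit. Unset Printing Implicit Defensive.

Definition circulant (n : nat) (S : seq nat) : rel 'I_n :=
  fun i j => ((j + n - i) %% n) \in S.

(* A directed xy-path in D: vertex sequence x :: p, consecutive vertices joined
   by arcs, ending at y, with no repeated vertex.  Its length is size p. *)
Definition dipath (n : nat) (D : rel 'I_n) (x y : 'I_n) (p : seq 'I_n) : bool :=
  [&& path D x p, last x p == y & uniq (x :: p)].

(* An arc-colouring with k colours is c : 'I_n -> 'I_n -> 'I_k (only its values
   on arcs matter).  A path is rainbow if its arcs have pairwise distinct colours. *)
Definition rainbow (n k : nat) (c : 'I_n -> 'I_n -> 'I_k) (x : 'I_n) (p : seq 'I_n) : bool :=
  uniq (pairmap c x p).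

Definition rainbow_connected (n k : nat) (D : rel 'I_n) (c : 'I_n -> 'I_n -> 'I_k) : Prop :=
  forall x y : 'I_n, x != y -> exists p, dipath D x y p && rainbow c x p.

Definition strongly_rainbow_connected (n k : nat) (D : rel 'I_n)
    (c : 'I_n -> 'I_n -> 'I_k) : Prop :=
  forall x y : 'I_n, x != y -> exists p, [/\ dipath D x y p, rainbow c x p &
    forall q, dipath D x y q -> size p <= size q].

Definition rc_colourable (n : nat) (D : rel 'I_n) (k : nat) : Prop :=
  exists c : 'I_n -> 'I_n -> 'I_k, rainbow_connected D c.

Definition src_colourable (n : nat) (D : rel 'I_n) (k : nat) : Prop :=
  exists c : 'I_n -> 'I_n -> 'I_k, strongly_rainbow_connected D c.

Definition rc_star_eq (n : nat) (D : rel 'I_n) (m : nat) : Prop :=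
  rc_colourable D m /\ forall k, rc_colourable D k -> m <= k.

Definition src_star_eq (n : nat) (D : rel 'I_n) (m : nat) : Prop :=
  src_colourable D m /\ forall k, src_colourable D k -> m <= k.
Arguments circulant n S i j : clear implicits.

From mathcomp Require Import all_boot zify.
Set Implicit Arguments. Unset Strict Implicit. Unset Printing Implicit Defensive.

(* Write n = an * k and view v_u as position u %% k of block u %/ k.  An arc
   advances by 1 or by k, so a walk from x to y with a1 unit steps and ak long
   steps has a1 + ak >= d %/ k + d %% k, where d = (y - x) mod n; for
   x = v_0, y = v_(n-1) this is an + k - 2, which bounds rc* from below.
   Conversely the route "a long steps, d %% k unit steps, the remaining long
   steps" is a shortest path, and the colouring [arc_colour] uses one colour
   per block plus k - 2 extra ones.  The unit steps of a route borrow at most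
   the block colours B0 + a, B0 + a + 1 and B0 + a + 2, where B0 is the block
   of x, so a suitable choice of a keeps the long steps off them and makes the
   route rainbow.  The case an = 2, k = 3 needs its own colouring and is
   checked by computation. *)

Lemma divmodn_small (m q r : nat) : r < m -> (q * m + r) %/ m = q /\ (q * m + r) %% m = r.
Proof.
move=> ltrm; have m_gt0 : 0 < m by case: m ltrm.
by rewrite divnMDl // divn_small // addn0 modnMDl modn_small.
Qed.

Definition circ_diff (n u v : nat) : nat := (v + n - u) %% n.

Lemma circulantE n S (u v : 'I_n) : circulant n S u v = (circ_diff n u v \in S).
Proof. by []. Qed.

Lemma circ_diff_addr (n x t : nat) : x < n -> circ_diff n x ((x + t) %% n) = t %% n.
Proof.
move=> ltxn; have n_gt0 : 0 < n by case: n ltxn.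
apply/eqP; rewrite -(modn_mod t) -(eqn_modDl x) /circ_diff modnDmr.
by rewrite addnBA ?(leq_trans (ltnW ltxn) (leq_addl _ _)) // addnC addnK modnDr modn_mod.
Qed.

Lemma circ_diff_modn_addr (n w t : nat) : 0 < n ->
  circ_diff n (w %% n) ((w + t) %% n) = t %% n.
Proof. by move=> n_gt0; rewrite -modnDml circ_diff_addr ?ltn_pmod. Qed.

Lemma ord_circ_diff n (u v : 'I_n) : val v = (u + circ_diff n u v) %% n.
Proof.
rewrite /circ_diff modnDmr addnBA; last by rewrite ltnW // ltn_addl.
by rewrite addnC addnK modnDr modn_small.
Qed.

Lemma path_circulant_steps n k (x : 'I_n) (p : seq 'I_n) :
  path (circulant n [:: 1; k]) x p ->
  exists a1 ak, a1 + ak = size p /\ (x + a1 + ak * k) %% n = last x p.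
Proof.
elim: p x => [|z p IHp] x /=; first by exists 0, 0; rewrite !addn0 modn_small.
case/andP=> xz /IHp[a1 [ak [sz_p last_p]]].
have z_eq : val z = (x + circ_diff n x z) %% n by apply: ord_circ_diff.
rewrite circulantE !inE in xz.
case/orP: xz => /eqP d_eq; rewrite d_eq in z_eq.
- exists a1.+1, ak; split; first by rewrite -sz_p addSn.
  by rewrite -last_p z_eq -!addnA modnDml; congr (_ %% n); lia.
- exists a1, ak.+1; split; first by rewrite -sz_p addnS.
  by rewrite -last_p z_eq -!addnA modnDml mulSn; congr (_ %% n); lia.
Qed.

Definition circ_dist (m k x y : nat) : nat :=
  circ_diff (m * k) x y %/ k + circ_diff (m * k) x y %% k.

Lemma circ_dist_steps m k (x : 'I_(m * k)) a1 ak : 0 < k ->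
  circ_dist m k x ((x + a1 + ak * k) %% (m * k)) <= a1 + ak.
Proof.
move=> k_gt0; rewrite /circ_dist -addnA circ_diff_addr ?ltn_ord //.
rewrite -modn_divl modn_dvdm ?dvdn_mull // [a1 + _]addnC modnMDl divnMDl //.
have := leq_mod (ak + a1 %/ k) m; have := divn_eq a1 k.
have : a1 %/ k <= a1 %/ k * k by rewrite leq_pmulr.
lia.
Qed.

Lemma dipath_size_ge m k (x y : 'I_(m * k)) p : 0 < k ->
  dipath (circulant (m * k) [:: 1; k]) x y p -> circ_dist m k x y <= size p.
Proof.
move=> k_gt0 /and3P[path_p /eqP last_p _].
have [a1 [ak [<- steps_eq]]] := path_circulant_steps path_p.
by rewrite -last_p -steps_eq circ_dist_steps.
Qed.

(* The route takes a long steps, then r unit steps, then long steps again;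
   [route_offset j] is its displacement after j steps. *)
Section RouteOffset.
Variables (k a r : nat).

Definition route_step (j : nat) : nat := if a <= j < a + r then 1 else k.

Definition route_offset (j : nat) : nat :=
  minn j a * k + minn (j - a) r + (j - (a + r)) * k.

Lemma route_offset_pre j : j <= a -> route_offset j = j * k.
Proof. by move=> le_ja; rewrite /route_offset (minn_idPl le_ja); lia. Qed.

Lemma route_offset_mid j : a <= j <= a + r -> route_offset j = a * k + (j - a).
Proof. by rewrite /route_offset; lia. Qed.

Lemma route_offset_post j : a + r <= j -> route_offset j = a * k + r + (j - (a + r)) * k.
Proof. by rewrite /route_offset; lia. Qed.

Lemma route_offsetS j : route_offset j.+1 = route_offset j + route_step j.
Proof.
rewrite /route_step; case: (ltnP j a) => [lt_ja|le_aj] /=.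
  by rewrite !route_offset_pre ?(ltnW lt_ja) // mulSn addnC.
case: (ltnP j (a + r)) => lt_jar.
  by rewrite !route_offset_mid; lia.
rewrite !route_offset_post ?(leq_trans lt_jar) // -addn1 -addnBAC // mulnDl; lia.
Qed.

Lemma route_offset_lt i j : 0 < k -> i < j -> route_offset i < route_offset j.
Proof.
move=> k_gt0; apply: (@homo_ltn _ route_offset (fun u v => u < v)) => [???|l].
  exact: ltn_trans.
by rewrite route_offsetS -{1}[route_offset _]addn0 ltn_add2l /route_step; case: ifP.
Qed.

Lemma route_offset_inj i j : 0 < k -> route_offset i = route_offset j -> i = j.
Proof.
move=> k_gt0 eq_ij; case: (ltngtP i j) => // lt_ij;
  by have := route_offset_lt k_gt0 lt_ij; rewrite eq_ij ltnn.
Qed.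

Lemma route_offset_end q : a <= q -> route_offset (q + r) = q * k + r.
Proof.
move=> le_aq; rewrite route_offset_post ?leq_add2r // subnDr.
by rewrite -addnA [r + _]addnC addnA -mulnDl subnKC.
Qed.

End RouteOffset.

Section MapIota.
Variables (T U : Type) (f : nat -> T).

Lemma path_map_iota (e : rel T) i l :
  path e (f i) [seq f j | j <- iota i.+1 l] = all (fun j => e (f j) (f j.+1)) (iota i l).
Proof. by elim: l i => [|l IHl] i //=; rewrite IHl. Qed.

Lemma last_map_iota i l : last (f i) [seq f j | j <- iota i.+1 l] = f (i + l).
Proof. by elim: l i => [|l IHl] i /=; rewrite ?addn0 // IHl addSnnS. Qed.

Lemma pairmap_map_iota (g : T -> T -> U) i l :
  pairmap g (f i) [seq f j | j <- iota i.+1 l] = [seq g (f j) (f j.+1) | j <- iota i l].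
Proof. by elim: l i => [|l IHl] i //=; rewrite IHl. Qed.

End MapIota.

Definition modn_ord (n : nat) (n_gt0 : 0 < n) (v : nat) : 'I_n := Ordinal (ltn_pmod v n_gt0).

Section Route.
Variables (m k : nat) (n_gt0 : 0 < m * k).
Hypotheses (m_gt1 : 1 < m) (k_gt0 : 0 < k).
Variables (x : 'I_(m * k)) (a r q : nat).
Hypotheses (le_aq : a <= q) (lt_qm : q < m) (lt_rk : r < k).

Definition route_vertex (j : nat) : 'I_(m * k) := modn_ord n_gt0 (x + route_offset k a r j).

Definition route : seq 'I_(m * k) := [seq route_vertex j | j <- iota 1 (q + r)].

Lemma route_vertex0 : route_vertex 0 = x.
Proof. by apply: val_inj; rewrite /= route_offset_pre // addn0 modn_small. Qed.

Lemma circ_diff_route_vertex j :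
  circ_diff (m * k) (route_vertex j) (route_vertex j.+1) = route_step k a r j.
Proof.
rewrite /= route_offsetS addnA circ_diff_modn_addr // modn_small //.
have lt_kn : k < m * k by rewrite ltn_Pmull.
by rewrite /route_step; case: ifP => // _; apply: leq_trans lt_kn.
Qed.

Lemma route_arc j : circulant (m * k) [:: 1; k] (route_vertex j) (route_vertex j.+1).
Proof.
by rewrite circulantE circ_diff_route_vertex /route_step; case: ifP; rewrite !inE eqxx ?orbT.
Qed.

Lemma route_offset_ltn j : j <= q + r -> route_offset k a r j < m * k.
Proof.
move=> le_jqr; apply: (@leq_ltn_trans (route_offset k a r (q + r))).
  by case: (ltngtP j (q + r)) le_jqr => // [/(route_offset_lt _ _ k_gt0)/ltnW|->].
by rewrite route_offset_end //; nia.
Qed.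

Lemma route_vertex_inj i j : i <= q + r -> j <= q + r -> route_vertex i = route_vertex j -> i = j.
Proof.
move=> le_iqr le_jqr /(congr1 val) /= /eqP.
rewrite eqn_modDl !modn_small ?route_offset_ltn // => /eqP.
exact: route_offset_inj.
Qed.

Lemma dipath_route :
  dipath (circulant (m * k) [:: 1; k]) x (modn_ord n_gt0 (x + (q * k + r))) route.
Proof.
rewrite /dipath /route -[in path _ x _]route_vertex0 -[in last x _]route_vertex0.
rewrite -[in x :: _]route_vertex0 path_map_iota last_map_iota; apply/and3P; split.
- by apply/allP => j _; apply: route_arc.
- by apply/eqP/val_inj; rewrite /= route_offset_end.
rewrite -[_ :: _]/[seq route_vertex j | j <- iota 0 (q + r).+1] map_inj_in_uniq ?iota_uniq //.
by move=> i j; rewrite !mem_iota !add0n !ltnS; apply: route_vertex_inj.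
Qed.

Lemma size_route : size route = q + r.
Proof. by rewrite size_map size_iota. Qed.

End Route.

(* Long arcs leaving block b, and the unit arc leaving its last position, get
   colour b.  The unit arc leaving position [skipped_pos k b] gets colour b + 1;
   the remaining k - 2 unit arcs of the block get the extra colours
   an, ..., an + k - 3 in order of position. *)
Definition skipped_pos (k b : nat) : nat := minn b (k - 2).

Definition unit_colour (an k b p : nat) : nat :=
  if p == k.-1 then b
  else if p == skipped_pos k b then b.+1 %% an
  else an + p - (skipped_pos k b < p).

Definition arc_colour (an k u v : nat) : nat :=
  if circ_diff (an * k) u v == 1 then unit_colour an k (u %/ k) (u %% k) else u %/ k.

(* Colours of route arcs before reduction modulo an: [(true, c)] is the block
   colour B0 + c, where B0 is the block of the start vertex, and [(false, e)]
   is the extra colour an + e.  [turn_code] codes the unit step leaving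
   position p of block B0 + a, where p >= k stands for position p - k of the
   next block. *)
Definition unit_code (s c p : nat) : bool * nat :=
  if p == s then (true, c) else (false, p - (s < p)).

Definition turn_code (k s s' a p : nat) : bool * nat :=
  if p < k.-1 then unit_code s a.+1 p
  else if p == k.-1 then (true, a) else unit_code s' a.+2 (p - k).

Definition code_colour (an B0 : nat) (c : bool * nat) : nat :=
  if c.1 then (B0 + c.2) %% an else an + c.2.

Lemma unit_colour_code an k B0 c p : p < k.-1 ->
  unit_colour an k ((B0 + c) %% an) p =
  code_colour an B0 (unit_code (skipped_pos k ((B0 + c) %% an)) c.+1 p).
Proof.
move=> lt_pk; rewrite /unit_colour /unit_code ifF; last by apply/negbTE; lia.
case: eqP => _; first by rewrite /code_colour -addn1 modnDml addn1 addnS.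
by rewrite /code_colour /= addnBA //; case: ltnP => // ?; lia.
Qed.

Lemma turn_code_inj k s s' a r0 r p p' : r0 < k -> r < k ->
  r0 <= p < r0 + r -> r0 <= p' < r0 + r ->
  turn_code k s s' a p = turn_code k s s' a p' -> p = p'.
Proof.
move=> lt_r0k lt_rk range_p range_p'; rewrite /turn_code /unit_code.
by repeat (case: ifP; intro); move/eqP; rewrite xpair_eqE /=; lia.
Qed.

Lemma turn_code_block k s s' a r0 r p c : r0 <= p < r0 + r ->
  turn_code k s s' a p = (true, c) ->
  [\/ c = a /\ k <= r0 + r, c = a.+1 /\ r0 <= s < r0 + r
    | [/\ c = a.+2, k <= r0 + r & s' < r0 + r - k]].
Proof.
move=> range_p; rewrite /turn_code /unit_code.
repeat (case: ifP; intro); case=> // <-;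
  by [apply: Or31; lia | apply: Or32; lia | apply: Or33; split; lia].
Qed.

Lemma turn_code_extra_lt k s s' a r0 r p e : r0 < k -> r < k -> p < r0 + r ->
  s <= k - 2 -> s' <= k - 2 -> turn_code k s s' a p = (false, e) -> e < k - 2.
Proof.
move=> lt_r0k lt_rk lt_p le_s le_s'; rewrite /turn_code /unit_code.
by repeat (case: ifP; intro); case=> // <-; lia.
Qed.

Lemma code_colour_inj an B0 (c c' : bool * nat) :
  (c.1 -> c.2 < an) -> (c'.1 -> c'.2 < an) ->
  code_colour an B0 c = code_colour an B0 c' -> c = c'.
Proof.
case: c c' => [[] e] [[] e'] /= lt_e lt_e'; rewrite /code_colour /=.
- by move/eqP; rewrite eqn_modDl !modn_small ?lt_e ?lt_e' // => /eqP ->.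
- by have := ltn_pmod (B0 + e) (leq_ltn_trans (leq0n e) (lt_e isT)); lia.
- by have := ltn_pmod (B0 + e') (leq_ltn_trans (leq0n e') (lt_e' isT)); lia.
- by move/eqP; rewrite eqn_add2l => /eqP ->.
Qed.

Lemma code_colour_lt an k B0 (c : bool * nat) : 0 < an -> 1 < k ->
  (~~ c.1 -> c.2 < k - 2) -> code_colour an B0 c < an + k - 2.
Proof.
case: c => [[] e] /= an_gt0 k_gt1 lt_e; rewrite /code_colour /=; last by have := lt_e isT; lia.
by have := ltn_pmod (B0 + e) an_gt0; lia.
Qed.

(* [a] counts the long steps before the unit steps.  The block colours
   B0 + a + 1 and B0 + a + 2 borrowed by the unit steps must be missed by the
   later long steps and must not wrap around onto those of the earlier ones. *)
Definition admissible_turn (an k B0 r0 q r a : nat) : Prop :=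
  [/\ a <= q,
      r0 <= skipped_pos k ((B0 + a) %% an) < r0 + r ->
        q + (k <= r0 + r) <= a.+1 /\ a.+2 <= an
    & k <= r0 + r -> skipped_pos k ((B0 + a).+1 %% an) < r0 + r - k ->
        q <= a.+1 /\ a.+3 <= an].

Section RainbowRoute.
Variables (an k : nat).
Hypotheses (an_gt1 : 1 < an) (k_gt1 : 1 < k).
Variables (n_gt0 : 0 < an * k) (x : 'I_(an * k)) (B0 r0 q r a : nat).
Hypotheses (x_eq : val x = B0 * k + r0) (lt_r0k : r0 < k) (lt_qan : q < an) (lt_rk : r < k).
Hypothesis turn_ok : admissible_turn an k B0 r0 q r a.

Let k_gt0 : 0 < k. Proof. exact: ltnW. Qed.
Let carry := k <= r0 + r.
Let sb := skipped_pos k ((B0 + a) %% an).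
Let sb' := skipped_pos k ((B0 + a).+1 %% an).
Let rv := route_vertex n_gt0 x a r.

Definition route_code (j : nat) : bool * nat :=
  if j < a then (true, j)
  else if j < a + r then turn_code k sb sb' a (r0 + (j - a))
  else (true, j - r + carry).

Lemma route_code_pre j : j < a -> route_code j = (true, j).
Proof. by move=> lt_ja; rewrite /route_code lt_ja. Qed.

Lemma route_code_turn j : a <= j < a + r -> route_code j = turn_code k sb sb' a (r0 + (j - a)).
Proof. by case/andP=> le_aj lt_jar; rewrite /route_code ltnNge le_aj lt_jar. Qed.

Lemma route_code_post j : a + r <= j -> route_code j = (true, j - r + carry).
Proof. by move=> le_arj; rewrite /route_code !ifF //; apply/negbTE; lia. Qed.

Lemma arc_colour_route_unit j : a <= j < a + r ->
  arc_colour an k (rv j) (rv j.+1) = unit_colour an k (rv j %/ k) (rv j %% k).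
Proof. by move=> in_turn; rewrite /arc_colour circ_diff_route_vertex // /route_step in_turn. Qed.

Lemma arc_colour_route_block j : ~~ (a <= j < a + r) -> arc_colour an k (rv j) (rv j.+1) = rv j %/ k.
Proof.
move=> /negbTE off_turn.
by rewrite /arc_colour circ_diff_route_vertex // /route_step off_turn gtn_eqF.
Qed.

Lemma route_vertex_block j b p : x + route_offset k a r j = b * k + p -> p < k ->
  rv j %/ k = b %% an /\ rv j %% k = p.
Proof.
move=> offset_eq lt_pk; rewrite /= -modn_divl modn_dvdm ?dvdn_mull // offset_eq.
by have [-> ->] := divmodn_small b lt_pk.
Qed.

Lemma arc_colour_route_pre j : j < a ->
  arc_colour an k (rv j) (rv j.+1) = code_colour an B0 (route_code j).
Proof.
move=> lt_ja; rewrite arc_colour_route_block; last by apply/negP; lia.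
have offset_eq : x + route_offset k a r j = (B0 + j) * k + r0.
  by rewrite route_offset_pre ?(ltnW lt_ja) // x_eq mulnDl addnAC.
by have [-> _] := route_vertex_block offset_eq lt_r0k; rewrite route_code_pre.
Qed.

Lemma arc_colour_route_turn j : a <= j < a + r ->
  arc_colour an k (rv j) (rv j.+1) = code_colour an B0 (route_code j).
Proof.
move=> in_turn; rewrite arc_colour_route_unit // route_code_turn // /turn_code.
set p := r0 + (j - a).
have offset_eq : x + route_offset k a r j = (B0 + a) * k + p.
  rewrite route_offset_mid; last by case/andP: in_turn => *; apply/andP; split; lia.
  by rewrite x_eq /p mulnDl; lia.
case: (ltnP p k) => [lt_pk|le_kp].
  have [-> ->] := route_vertex_block offset_eq lt_pk.
  case: (ltnP p k.-1) => [lt_pk1|]; first exact: unit_colour_code.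
  rewrite leq_eqVlt => /orP[/eqP p_last|]; last by lia.
  by rewrite -p_last eqxx /unit_colour eqxx.
have offset_eq' : x + route_offset k a r j = (B0 + a).+1 * k + (p - k).
  by rewrite offset_eq mulSn; lia.
have lt_pk' : p - k < k by lia.
have [-> ->] := route_vertex_block offset_eq' lt_pk'.
rewrite !ifF; try by apply/negbTE; lia.
by rewrite /sb' -addnS unit_colour_code //; lia.
Qed.

Lemma arc_colour_route_post j : a + r <= j ->
  arc_colour an k (rv j) (rv j.+1) = code_colour an B0 (route_code j).
Proof.
move=> le_arj; rewrite arc_colour_route_block; last by apply/negP; lia.
have lt_rem : r0 + r - k * carry < k by rewrite /carry; case: leqP; lia.
have offset_eq : x + route_offset k a r j = (B0 + (j - r + carry)) * k + (r0 + r - k * carry).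
  rewrite route_offset_post // x_eq /carry; case: leqP => carry_k /=.
    have -> : B0 + (j - r + 1) = (B0 + a + (j - (a + r))).+1 by lia.
    by rewrite mulSn !mulnDl; lia.
  have -> : B0 + (j - r + 0) = B0 + a + (j - (a + r)) by lia.
  by rewrite !mulnDl; lia.
by have [-> _] := route_vertex_block offset_eq lt_rem; rewrite route_code_post.
Qed.

Lemma arc_colour_route j : arc_colour an k (rv j) (rv j.+1) = code_colour an B0 (route_code j).
Proof.
case: (ltnP j a) => [|le_aj]; first exact: arc_colour_route_pre.
case: (ltnP j (a + r)) => [lt_jar|]; last exact: arc_colour_route_post.
by apply: arc_colour_route_turn; rewrite le_aj lt_jar.
Qed.

Lemma route_code_block_lt j : j < q + r -> (route_code j).1 -> (route_code j).2 < an.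
Proof.
case: turn_ok => le_aq turn_sb turn_sb' lt_jqr.
case: (ltnP j a) => [lt_ja|le_aj]; first by rewrite route_code_pre //= => _; lia.
case: (ltnP j (a + r)) => [lt_jar|le_arj]; last first.
  by rewrite route_code_post //= /carry => _; case: leqP; lia.
rewrite route_code_turn ?le_aj //; case E: turn_code => [[] c] //= _.
have range_p : r0 <= r0 + (j - a) < r0 + r by lia.
by have [[-> _]|[-> /turn_sb]|[-> carry_k /(turn_sb' carry_k)]] := turn_code_block range_p E; lia.
Qed.

Lemma route_code_extra_lt j : j < q + r -> ~~ (route_code j).1 -> (route_code j).2 < k - 2.
Proof.
move=> lt_jqr; case: (ltnP j a) => [lt_ja|le_aj]; first by rewrite route_code_pre.
case: (ltnP j (a + r)) => [lt_jar|le_arj]; last by rewrite route_code_post.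
rewrite route_code_turn ?le_aj //; case E: turn_code => [[] e] //= _.
apply: (@turn_code_extra_lt k sb sb' a r0 r _ _ lt_r0k lt_rk _ _ _ E); first by lia.
all: exact: geq_minr.
Qed.

Lemma route_code_inj i j : i < q + r -> j < q + r -> route_code i = route_code j -> i = j.
Proof.
case: turn_ok => le_aq turn_sb turn_sb'.
wlog le_ij : i j / i <= j.
  move=> sym lt_i lt_j E; case: (leqP i j) => [|/ltnW] le; first exact: sym.
  exact/esym/sym.
move=> lt_iqr lt_jqr.
case: (ltnP j a) => [lt_ja|le_aj].
  by rewrite !route_code_pre ?(leq_ltn_trans le_ij) // => -[].
case: (ltnP i a) => [lt_ia|le_ai].
  rewrite route_code_pre //; case: (ltnP j (a + r)) => [lt_jar|le_arj].
    rewrite route_code_turn ?le_aj // => /esym E.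
    have range_j : r0 <= r0 + (j - a) < r0 + r by lia.
    by have [[? _]|[? _]|[? _ _]] := turn_code_block range_j E; lia.
  by rewrite route_code_post // => -[]; rewrite /carry; case: leqP; lia.
case: (ltnP j (a + r)) => [lt_jar|le_arj].
  rewrite !route_code_turn ?le_aj ?le_ai ?(leq_ltn_trans le_ij) // => E.
  have range_i : r0 <= r0 + (i - a) < r0 + r by lia.
  have range_j : r0 <= r0 + (j - a) < r0 + r by lia.
  by have := turn_code_inj lt_r0k lt_rk range_i range_j E; lia.
case: (ltnP i (a + r)) => [lt_iar|le_ari].
  rewrite route_code_turn ?le_ai // route_code_post // => E.
  have range_i : r0 <= r0 + (i - a) < r0 + r by lia.
  have [[eq_c carry_k]|[eq_c /turn_sb]|[eq_c carry_k /(turn_sb' carry_k)]] :=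
    turn_code_block range_i E; move: eq_c; rewrite /carry; case: leqP; lia.
by rewrite !route_code_post // => -[]; lia.
Qed.

Lemma rainbow_route (m_gt0 : 0 < an + k - 2) :
  rainbow (fun u v => modn_ord m_gt0 (arc_colour an k u v)) x (route n_gt0 x a r q).
Proof.
have lt_colour l : l < q + r -> code_colour an B0 (route_code l) < an + k - 2.
  move=> lt_lqr; apply: code_colour_lt; [exact: ltnW | by [] | exact: route_code_extra_lt].
rewrite /rainbow /route -[X in pairmap _ X _](route_vertex0 n_gt0 x a r) pairmap_map_iota.
rewrite map_inj_in_uniq ?iota_uniq // => i j; rewrite !mem_iota !add0n => lt_iqr lt_jqr.
move/(congr1 val); rewrite /= !arc_colour_route !modn_small ?lt_colour //.
move/code_colour_inj => /(_ (route_code_block_lt lt_iqr) (route_code_block_lt lt_jqr)).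
exact: route_code_inj.
Qed.
End RainbowRoute.

Section TurnChoice.
Variables (an k B0 r0 q r : nat).
Hypotheses (k_ge3 : 3 <= k) (le_k1_an : k - 1 <= an) (an_ge3 : 3 <= an).
Hypotheses (lt_B0an : B0 < an) (lt_r0k : r0 < k) (lt_qan : q < an) (lt_rk : r < k).

Let skipped_small b : b <= k - 2 -> skipped_pos k b = b.
Proof. exact: minn_idPl. Qed.

Lemma admissible_turn_no_carry : r0 + r < k -> admissible_turn an k B0 r0 q r q.-1.
Proof. by move=> no_carry; split; lia. Qed.

Lemma admissible_turn_early : q + 3 <= an -> admissible_turn an k B0 r0 q r q.
Proof. by move=> le_q3; split; lia. Qed.

Lemma admissible_turn_before_carry a : k <= r0 + r -> a <= q ->
  (B0 + a) %% an = (r0 + r - k).-1 -> admissible_turn an k B0 r0 q r a.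
Proof.
move=> carry le_aq turn_eq; split=> //.
  by rewrite turn_eq skipped_small; lia.
have next_eq : (B0 + a).+1 %% an = (r0 + r - k).-1.+1.
  by rewrite -addn1 -modnDml turn_eq addn1 modn_small //; lia.
by rewrite next_eq /skipped_pos; lia.
Qed.

Lemma admissible_turn_exceptional : k <= r0 + r -> q = an - 2 -> B0 = maxn (r0 + r - k) 1 ->
  exists a, admissible_turn an k B0 r0 q r a.
Proof.
move=> carry q_eq B0_eq; set t := r0 + r - k in B0_eq; have t_def : t = r0 + r - k by []; clearbody t.
have [t0|t_gt0] := posnP t; first by exists q; split; lia.
case: (ltnP t.+1 an) => [lt_t1an|le_ant1].
  have B0_t : B0 = t by lia.
  exists 0; split=> //; rewrite addn0 B0_t modn_small // /skipped_pos.
  - by case/andP; lia.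
  - lia.
  - lia.
by exists q.-1; split; rewrite /skipped_pos; lia.
Qed.

Lemma exists_admissible_turn : exists a, admissible_turn an k B0 r0 q r a.
Proof.
case: (ltnP (r0 + r) k) => [no_carry|carry].
  by exists q.-1; apply: admissible_turn_no_carry.
case: (leqP (q + 3) an) => [early|late]; first by exists q; apply: admissible_turn_early.
set t := r0 + r - k; have t_def : t = r0 + r - k by []; clearbody t.
case: (boolP ((q == an - 1) || (B0 != maxn t 1))) => [regular|]; last first.
  rewrite negb_or negbK => /andP[q_ne /eqP B0_eq].
  by apply: admissible_turn_exceptional => //; lia.
case: (leqP B0 t.-1) => [le_B0t|lt_tB0].
  exists (t.-1 - B0); apply: admissible_turn_before_carry => //; first by lia.
  by rewrite subnKC // modn_small //; lia.
exists (t.-1 + an - B0); apply: admissible_turn_before_carry => //; first by lia.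
have -> : B0 + (t.-1 + an - B0) = t.-1 + an by lia.
by rewrite modnDr modn_small //; lia.
Qed.

End TurnChoice.

Lemma rainbow_size_le n m (c : 'I_n -> 'I_n -> 'I_m) (x : 'I_n) p :
  rainbow c x p -> size p <= m.
Proof.
move/card_uniqP; rewrite size_pairmap => <-.
by rewrite (leq_trans (max_card _)) ?card_ord.
Qed.

Lemma src_colourable_rc n (D : rel 'I_n) m : src_colourable D m -> rc_colourable D m.
Proof.
case=> c src_c; exists c => x y neq_xy.
by have [p [dipath_p rainbow_p _]] := src_c x y neq_xy; exists p; rewrite dipath_p.
Qed.

Lemma circ_dist_antipodal m k : 0 < m -> 0 < k -> circ_dist m k 0 (m * k - 1) = m + k - 2.
Proof.
move=> m_gt0 k_gt0; rewrite /circ_dist /circ_diff subn0 modnDr modn_small; last first.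
  by rewrite subn1 prednK ?muln_gt0 ?m_gt0.
have -> : m * k - 1 = (m - 1) * k + (k - 1) by rewrite mulnBl mul1n; nia.
have lt_k1k : k - 1 < k by rewrite subn1 prednK.
by have [-> ->] := divmodn_small (m - 1) lt_k1k; lia.
Qed.

Lemma rc_colourable_ge an k m : 1 < an -> 0 < k ->
  rc_colourable (circulant (an * k) [:: 1; k]) m -> an + k - 2 <= m.
Proof.
move=> an_gt1 k_gt0 [c rc_c].
have n_gt0 : 0 < an * k by rewrite muln_gt0 k_gt0 (ltnW an_gt1).
have neq_ends : modn_ord n_gt0 0 != modn_ord n_gt0 (an * k - 1).
  by apply/eqP => /(congr1 val) /=; rewrite !modn_small; nia.
have [p /andP[dipath_p /rainbow_size_le]] := rc_c _ _ neq_ends.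
apply: leq_trans; have := dipath_size_ge k_gt0 dipath_p.
by rewrite /= mod0n (modn_small (_ : an * k - 1 < an * k)) ?circ_dist_antipodal //; nia.
Qed.

Section RoutesSuffice.
Variables (m k l : nat) (n_gt0 : 0 < m * k) (c : 'I_(m * k) -> 'I_(m * k) -> 'I_l).
Hypotheses (m_gt1 : 1 < m) (k_gt0 : 0 < k).

Lemma route_target (x y : 'I_(m * k)) :
  modn_ord n_gt0 (x + (circ_diff (m * k) x y %/ k * k + circ_diff (m * k) x y %% k)) = y.
Proof. by apply: val_inj; rewrite /= -divn_eq -ord_circ_diff. Qed.

Lemma src_of_rainbow_routes :
  (forall x y : 'I_(m * k), x != y -> exists2 a, a <= circ_diff (m * k) x y %/ k &
     rainbow c x (route n_gt0 x a (circ_diff (m * k) x y %% k) (circ_diff (m * k) x y %/ k))) ->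
  strongly_rainbow_connected (circulant (m * k) [:: 1; k]) c.
Proof.
move=> routes x y neq_xy; have [a le_aq rainbow_route] := routes x y neq_xy.
set d := circ_diff (m * k) x y in le_aq rainbow_route.
have lt_dn : d < m * k by apply: ltn_pmod.
exists (route n_gt0 x a (d %% k) (d %/ k)); split=> //.
  have lt_qm : d %/ k < m by rewrite ltn_divLR.
  by have := dipath_route n_gt0 m_gt1 k_gt0 x le_aq lt_qm (ltn_pmod d k_gt0); rewrite route_target.
by move=> p dipath_p; rewrite size_route; apply: dipath_size_ge dipath_p.
Qed.

End RoutesSuffice.

Lemma src_colourable_upper an k : 3 <= k -> k - 1 <= an -> 3 <= an ->
  src_colourable (circulant (an * k) [:: 1; k]) (an + k - 2).
Proof.
move=> k_ge3 le_k1_an an_ge3.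
have n_gt0 : 0 < an * k by rewrite muln_gt0; apply/andP; split; lia.
have col_gt0 : 0 < an + k - 2 by lia.
exists (fun u v => modn_ord col_gt0 (arc_colour an k u v)).
apply: src_of_rainbow_routes; [lia | lia | move=> x y _].
set d := circ_diff (an * k) x y.
have lt_qan : d %/ k < an by rewrite ltn_divLR ?ltn_pmod //; lia.
have lt_B0an : x %/ k < an by rewrite ltn_divLR ?ltn_ord //; lia.
have lt_rk : d %% k < k by rewrite ltn_pmod //; lia.
have lt_r0k : x %% k < k by rewrite ltn_pmod //; lia.
have [a turn_ok] := exists_admissible_turn k_ge3 le_k1_an an_ge3 lt_B0an lt_r0k lt_qan lt_rk.
exists a; first by case: turn_ok.
have an_gt1 : 1 < an by lia.
have k_gt1 : 1 < k by lia.
exact: (rainbow_route an_gt1 k_gt1 n_gt0 (divn_eq x k) lt_r0k lt_qan lt_rk turn_ok).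
Qed.

Definition n6_gt0 : 0 < 2 * 3 := isT.
Definition colours6_gt0 : 0 < 2 + 3 - 2 := isT.

(* [arc_colour 2 3] fails here: both arcs of the route from v_5 to v_1 get colour 1. *)
Definition colour6 (u v : 'I_(2 * 3)) : 'I_(2 + 3 - 2) :=
  modn_ord colours6_gt0 (if circ_diff (2 * 3) u v == 1 then nth 0 [:: 0; 1; 2; 1; 2; 1] u else 0).

Definition rainbow_route6 (x y : 'I_(2 * 3)) : bool :=
  let d := circ_diff (2 * 3) x y in
  has (fun a => (a <= d %/ 3) && rainbow colour6 x (route n6_gt0 x a (d %% 3) (d %/ 3))) (iota 0 2).

Lemma rainbow_routes6 : all (fun xv => all (fun yv =>
  let x := modn_ord n6_gt0 xv in let y := modn_ord n6_gt0 yv in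
  (x != y) ==> rainbow_route6 x y) (iota 0 6)) (iota 0 6).
Proof. by vm_compute. Qed.

Lemma src_colourable6 : src_colourable (circulant (2 * 3) [:: 1; 3]) (2 + 3 - 2).
Proof.
have modn_ord6 (x : 'I_(2 * 3)) : modn_ord n6_gt0 x = x by apply: val_inj; rewrite /= modn_small.
exists colour6; apply: src_of_rainbow_routes => // x y neq_xy.
move/allP/(_ x): rainbow_routes6; rewrite mem_iota ltn_ord => /(_ isT) /allP /(_ y).
rewrite mem_iota ltn_ord /= !modn_ord6 neq_xy => /(_ isT) /hasP[a _].
by case/andP; exists a.
Qed.

Theorem theorem11 (k an : nat) :
  2 <= k - 1 -> k - 1 <= an ->
  src_star_eq (circulant (an * k) [:: 1; k]) (an + k - 2) /\
  rc_star_eq (circulant (an * k) [:: 1; k]) (an + k - 2).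
Proof.
move=> k_ge3 le_k1_an.
have upper : src_colourable (circulant (an * k) [:: 1; k]) (an + k - 2).
  case: (leqP 3 an) => [an_ge3|an_lt3]; first by apply: src_colourable_upper; lia.
  have [-> ->] : an = 2 /\ k = 3 by lia.
  exact: src_colourable6.
have lower m : rc_colourable (circulant (an * k) [:: 1; k]) m -> an + k - 2 <= m.
  by apply: rc_colourable_ge; lia.
split; split.
- exact: upper.
- by move=> m /src_colourable_rc/lower.
- exact: src_colourable_rc upper.
- exact: lower.
Qed.
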